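(* Let $\mathfrak{U}$ be a Banach algebra such that $\mathfrak{U}^\sharp$ is symmetrically pseudo-amenable, with a symmetric approximate diagonal $\{\mathbf{t}_\lambda\}_{\lambda\in\Lambda}\subseteq\mathfrak{U}^\sharp\widehat{\otimes}\mathfrak{U}^\sharp$. Let $X$ be a Banach $\mathfrak{U}$-bimodule such that for each $x\in X$ the net $\{\psi_x(\mathbf{t}_\lambda)\}_{\lambda\in\Lambda}$ is bounded, and let $D:\mathfrak{U}\to X$ be a bounded Lie derivation such that the net $\{\Phi_D(\mathbf{t}_\lambda)\}_{\lambda\in\Lambda}$ is bounded. Then there exist a bounded derivation $d:\mathfrak{U}\to X$ and a bounded linear map $\tau:\mathfrak{U}\to\mathcal{Z}_{\mathfrak{U}}(X)$ with $\tau(ab-ba)=0$ for all $a,b\in\mathfrak{U}$ (a central trace), such that $D=d+\tau$.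
   Context: $\mathfrak{U}^\sharp=\mathfrak{U}\oplus\mathbb{C}1$ is the unitization of $\mathfrak{U}$ with the $\ell^1$-norm (a unit is adjoined even if $\mathfrak{U}$ is unital); a Banach $\mathfrak{U}$-bimodule $X$ is made a unital Banach $\mathfrak{U}^\sharp$-bimodule by $1x=x1=x$. $\mathcal{Z}_{\mathfrak{U}}(X)=\{x\in X: ax=xa\ \forall a\in\mathfrak{U}\}$. For $x\in X$, $\psi_x:\mathfrak{U}^\sharp\widehat{\otimes}\mathfrak{U}^\sharp\to X$ is the bounded linear map with $\psi_x(a\otimes b)=axb$. For a bounded linear map $T:\mathfrak{U}\to X$, extended to $\mathfrak{U}^\sharp$ by $T(1)=0$, $\Phi_T:\mathfrak{U}^\sharp\widehat{\otimes}\mathfrak{U}^\sharp\to X$ is the bounded linear map with $\Phi_T(a\otimes b)=aT(b)$. A linear map $\delta$ is a derivation if $\delta(ab)=\delta(a)b+a\delta(b)$, and a Lie derivation if $\delta(ab-ba)=\delta(a)b+a\delta(b)-\delta(b)a-b\delta(a)$, for all $a,b$. For a Banach algebra $\mathfrak{A}$, $\mathfrak{A}\widehat{\otimes}\mathfrak{A}$ is the projective tensor product with $a(b\otimes c)=ab\otimes c$, $(b\otimes c)a=b\otimes ca$, $\pi(b\otimes c)=bc$ (extended linearly and continuously); the flip is $(b\otimes c)^\circ=c\otimes b$ and $\mathbf{t}$ is symmetric if $\mathbf{t}^\circ=\mathbf{t}$. A symmetric approximate diagonal is a net $\{\mathbf{t}_\lambda\}$ (not necessarily bounded) of symmetric elements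 with $a\mathbf{t}_\lambda-\mathbf{t}_\lambda a\to0$ and $\pi(\mathbf{t}_\lambda)a\to a$ for all $a\in\mathfrak{A}$; $\mathfrak{A}$ is symmetrically pseudo-amenable if it has one. *)

From HB Require Import structures.
From mathcomp Require Import all_boot all_order all_algebra.
From mathcomp Require Import complex.
From mathcomp Require Import all_classical all_reals all_analysis.
Set Implicit Arguments. Unset Strict Implicit. Unset Printing Implicit Defensive.
Import Order.TTheory GRing.Theory Num.Theory.
Local Open Scope ring_scope.
Local Open Scope complex_scope.

Definition islinear (K : numDomainType) (E F : lmodType K) (f : E -> F) :=
  forall (a : K) (u v : E), f (a *: u + v) = a *: f u + f v.

Definition bilinear_map (K : numDomainType) (E F G : lmodType K) (b : E -> F -> G) :=
  (forall e, islinear (b e)) /\ (forall f, islinear (fun e => b e f)).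

Definition bounded_op (K : numDomainType) (E F : Type) (nE : E -> K) (nF : F -> K)
  (f : E -> F) := exists M : K, forall u, nF (f u) <= M * nE u.

Definition banach_algebra (R : realType) (A : completeNormedModType R[i])
  (mul : A -> A -> A) :=
  [/\ bilinear_map mul,
      (forall a b c, mul a (mul b c) = mul (mul a b) c) &
      (forall a b, `|mul a b| <= `|a| * `|b|)].

Definition banach_bimodule (R : realType) (A X : completeNormedModType R[i])
  (mul : A -> A -> A) (lm : A -> X -> X) (rm : X -> A -> X) :=
  [/\ bilinear_map lm, bilinear_map rm,
      (forall a x, `|lm a x| <= `|a| * `|x|),
      (forall x a, `|rm x a| <= `|x| * `|a|) &
      [/\ (forall a b x, lm (mul a b) x = lm a (lm b x)),
          (forall x a b, rm x (mul a b) = rm (rm x a) b) &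
          (forall a x b, lm a (rm x b) = rm (lm a x) b)]].

(* Unitization A^# = A (+) C1 with l^1 norm; (a, alpha) stands for a + alpha 1 *)
Definition unit_mul (R : realType) (A : completeNormedModType R[i])
  (mul : A -> A -> A) (u v : A * R[i]) : A * R[i] :=
  (mul u.1 v.1 + u.2 *: v.1 + v.2 *: u.1, u.2 * v.2).

Definition unit_norm (R : realType) (A : completeNormedModType R[i])
  (u : A * R[i]) : R[i] := `|u.1| + `|u.2|.

Definition unit_lact (R : realType) (A X : completeNormedModType R[i])
  (lm : A -> X -> X) (u : A * R[i]) (x : X) : X := lm u.1 x + u.2 *: x.

Definition unit_ract (R : realType) (A X : completeNormedModType R[i])
  (rm : X -> A -> X) (x : X) (u : A * R[i]) : X := rm x u.1 + u.2 *: x.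

Definition is_derivation (R : realType) (A X : completeNormedModType R[i])
  (mul : A -> A -> A) (lm : A -> X -> X) (rm : X -> A -> X) (d : A -> X) :=
  islinear d /\ forall a b, d (mul a b) = rm (d a) b + lm a (d b).

Definition is_lie_derivation (R : realType) (A X : completeNormedModType R[i])
  (mul : A -> A -> A) (lm : A -> X -> X) (rm : X -> A -> X) (d : A -> X) :=
  islinear d /\ forall a b,
    d (mul a b - mul b a) = rm (d a) b + lm a (d b) - rm (d b) a - lm b (d a).

Definition in_center (R : realType) (A X : completeNormedModType R[i])
  (lm : A -> X -> X) (rm : X -> A -> X) (x : X) :=
  forall a : A, lm a x = rm x a.

(* Projective tensor product E (^) E of a normed space (E, nE), given through its
   universal property: tens is bilinear of norm <= 1, and every bounded bilinear
   map into a Banach space factors uniquely through a bounded linear map of the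
   same bound.  This determines (T, tens) up to isometric isomorphism. *)
Definition is_proj_tensor (R : realType) (E : lmodType R[i]) (nE : E -> R[i])
  (T : completeNormedModType R[i]) (tens : E -> E -> T) :=
  [/\ bilinear_map tens,
      (forall e f, `|tens e f| <= nE e * nE f) &
      (forall (Z : completeNormedModType R[i]) (beta : E -> E -> Z) (M : R[i]),
         bilinear_map beta -> 0 <= M ->
         (forall e f, `|beta e f| <= M * nE e * nE f) ->
         exists L : T -> Z,
           [/\ islinear L,
               (forall e f, L (tens e f) = beta e f),
               (forall t, `|L t| <= M * `|t|) &
               (forall L' : T -> Z, islinear L' -> bounded_op Num.norm Num.norm L' ->
                  (forall e f, L' (tens e f) = beta e f) -> L' = L)])].

Definition directed (L : Type) (le : L -> L -> Prop) :=
  [/\ inhabited L, (forall l, le l l),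
      (forall a b c, le a b -> le b c -> le a c) &
      (forall a b, exists c, le a c /\ le b c)].

Definition net_to0 (L : Type) (le : L -> L -> Prop) (K : numDomainType) (f : L -> K) :=
  forall e : K, 0 < e -> exists l0, forall l, le l0 l -> f l < e.

Definition net_bounded (L : Type) (F : Type) (K : numDomainType) (nF : F -> K) (f : L -> F) :=
  exists M : K, forall l, nF (f l) <= M.

(* Write z_l(a) = psi_{D a}(t_l).  The Lie identity for D and the symmetry of t_l give
     z_l(a) = D a + r_l(a) - (a Phi_D(t_l) - Phi_D(t_l) a)
   with r_l(a) -> 0, because pi(t_l) -> 1 and b t_l - t_l b -> 0.  The net z_l(a) is Cauchy:
   for a fixed s = t_n one has z ~ z pi(s) ~ psi_z(s), where the second step holds along
   z = z_l(a) since psi_z(s) - z pi(s) -> 0 (on elementary tensors this is the approximate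
   centrality of t_l, and the boundedness of psi_{D a}(t_l) extends it to every s), while
   psi_{z_l - z_m}(s) is small by the decomposition above and the boundedness of Phi_D(t_l).
   The limit tau(a) is central, as b z_l(a) - z_l(a) b = psi_{D a}(b t_l - t_l b) -> 0, and
   d = D - tau is the pointwise limit of the inner derivations a |-> a Phi_D(t_l) - Phi_D(t_l) a,
   hence a bounded derivation.  Then tau = D - d is a central-valued Lie derivation, so it
   vanishes on commutators. *)

From HB Require Import structures.
From mathcomp Require Import all_boot all_order all_algebra.
From mathcomp Require Import complex.
From mathcomp Require Import all_classical all_reals all_analysis.
From mathcomp Require Import ring.
Import Order.TTheory GRing.Theory Num.Theory.
Local Open Scope ring_scope.
Local Open Scope complex_scope.
Set Implicit Arguments. Unset Strict Implicit. Unset Printing Implicit Defensive.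

Lemma subrBB (V : zmodType) (x y z : V) : (x - y) - (z - y) = x - z.
Proof. by rewrite opprB addrA subrK. Qed.

Section LinearMaps.
Variable R : realType.
Local Notation K := (R[i]).
Implicit Types E F G : lmodType K.

Lemma islinear0 E F (f : E -> F) : islinear f -> f 0 = 0.
Proof.
move=> hf; have := hf 1 0 0; rewrite !scale1r addr0 => /esym/eqP.
by rewrite -subr_eq0 addrK => /eqP.
Qed.

Lemma islinearD E F (f : E -> F) u v : islinear f -> f (u + v) = f u + f v.
Proof. by move=> hf; have := hf 1 u v; rewrite !scale1r. Qed.

Lemma islinearZ E F (f : E -> F) c u : islinear f -> f (c *: u) = c *: f u.
Proof. by move=> hf; have := hf c u 0; rewrite !addr0 (islinear0 hf) addr0. Qed.

Lemma islinearN E F (f : E -> F) u : islinear f -> f (- u) = - f u.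
Proof. by move=> hf; rewrite -scaleN1r islinearZ // scaleN1r. Qed.

Lemma islinearB E F (f : E -> F) u v : islinear f -> f (u - v) = f u - f v.
Proof. by move=> hf; rewrite islinearD // islinearN. Qed.

Lemma islinear_comp E F G (f : F -> G) (g : E -> F) :
  islinear f -> islinear g -> islinear (fun s => f (g s)).
Proof. by move=> hf hg c u v; rewrite hg hf. Qed.

Lemma islinear_add E F (f g : E -> F) :
  islinear f -> islinear g -> islinear (fun s => f s + g s).
Proof. by move=> hf hg c u v; rewrite hf hg scalerDr addrACA. Qed.

Lemma islinear_sub E F (f g : E -> F) :
  islinear f -> islinear g -> islinear (fun s => f s - g s).
Proof. by move=> hf hg c u v; rewrite hf hg scalerBr opprD addrACA. Qed.

Lemma bounded_op_ge0 (E F : Type) (nE : E -> K) (nF : F -> K) (f : E -> F) :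
  (forall u, 0 <= nE u) -> (forall u, 0 <= nF u) -> bounded_op nE nF f ->
  exists M : K, 0 <= M /\ forall u, nF (f u) <= M * nE u.
Proof.
move=> hE hF [M hM]; exists `|M|; split => // u.
have M0 : 0 <= M * nE u by apply: le_trans (hF _) (hM u).
by apply: le_trans (hM u) _; rewrite -(ger0_norm M0) normrM (ger0_norm (hE u)).
Qed.

Lemma bounded_op_comp (E F G : Type) (nE : E -> K) (nF : F -> K) (nG : G -> K)
    (f : F -> G) (g : E -> F) :
  (forall u, 0 <= nE u) -> (forall u, 0 <= nF u) -> (forall u, 0 <= nG u) ->
  bounded_op nF nG f -> bounded_op nE nF g -> bounded_op nE nG (fun s => f (g s)).
Proof.
move=> hE hF hG bf bg.
have [M1 [M10 h1]] := bounded_op_ge0 hF hG bf.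
have [M2 [M20 h2]] := bounded_op_ge0 hE hF bg.
by exists (M1 * M2) => u; apply: le_trans (h1 _) _; rewrite -mulrA ler_wpM2l.
Qed.

Lemma bounded_op_add (E : Type) (F : normedModType K) (nE : E -> K) (f g : E -> F) :
  (forall u, 0 <= nE u) -> bounded_op nE Num.norm f -> bounded_op nE Num.norm g ->
  bounded_op nE Num.norm (fun s => f s + g s).
Proof.
move=> hE bf bg.
have [M1 [_ h1]] := bounded_op_ge0 hE (fun _ => normr_ge0 _) bf.
have [M2 [_ h2]] := bounded_op_ge0 hE (fun _ => normr_ge0 _) bg.
by exists (M1 + M2) => u; rewrite mulrDl (le_trans (ler_normD _ _)) // lerD.
Qed.

Lemma bounded_op_sub (E : Type) (F : normedModType K) (nE : E -> K) (f g : E -> F) :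
  (forall u, 0 <= nE u) -> bounded_op nE Num.norm f -> bounded_op nE Num.norm g ->
  bounded_op nE Num.norm (fun s => f s - g s).
Proof.
move=> hE bf [M hM]; apply: bounded_op_add => //.
by exists M => u; rewrite normrN.
Qed.

End LinearMaps.

Section Nets.
Variable R : realType.
Local Notation K := (R[i]).
Local Open Scope classical_set_scope.
Variables (Lam : Type) (le : Lam -> Lam -> Prop).
Hypothesis hdir : directed le.

Let lam_refl l : le l l. Proof. by case: hdir. Qed.
Let lam_trans a b c : le a b -> le b c -> le a c. Proof. by case: hdir => _ _ h _; apply: h. Qed.
Let lam_upper a b : exists c, le a c /\ le b c. Proof. by case: hdir => _ _ _ h; apply: h. Qed.

Definition net_filter : set_system Lam := filter_from setT (fun l0 => [set l | le l0 l]).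

Lemma net_filter_proper : ProperFilter net_filter.
Proof.
case: hdir => [[l0] _ _ _].
apply: filter_from_proper; last by move=> l _; exists l; apply: lam_refl.
apply: filter_fromT_filter; first by exists l0.
move=> i j; have [k [ik jk]] := lam_upper i j.
by exists k => l /= kl; split; apply: lam_trans kl.
Qed.

Definition net_cauchy (X : normedModType K) (z : Lam -> X) :=
  forall e : K, 0 < e -> exists l0, forall l m, le l0 l -> le l0 m -> `|z l - z m| < e.

Lemma net_cauchy_lim (X : completeNormedModType K) (z : Lam -> X) :
  net_cauchy z -> net_to0 le (fun l => `|lim (z @ net_filter) - z l|).
Proof.
move=> hc; have PF := net_filter_proper.
have hcv : cvg (z @ net_filter).
  apply: cauchy_cvg; apply: cauchy_exP => e e0.
  have [l0 hl0] := hc e e0; exists (z l0), l0 => // l /= hl.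
  by rewrite -ball_normE /=; apply: hl0.
move=> e e0; have [l0 _ hl0] := @cvgr_dist_lt _ _ _ _ _ z _ hcv e e0.
by exists l0 => l hl; apply: hl0.
Qed.

Lemma net_bounded_ge0 (X : normedModType K) (x : Lam -> X) :
  net_bounded Num.norm x -> exists M : K, 0 <= M /\ forall l, `|x l| <= M.
Proof.
case: hdir => [[l0] _ _ _] [M hM].
by exists M; split => //; apply: le_trans (hM l0).
Qed.

Lemma net_to0D (f g : Lam -> K) :
  net_to0 le f -> net_to0 le g -> net_to0 le (fun l => f l + g l).
Proof.
move=> hf hg e e0; have e2 : 0 < e / 2 by rewrite divr_gt0.
have [l1 h1] := hf _ e2; have [l2 h2] := hg _ e2; have [l3 [l13 l23]] := lam_upper l1 l2.
by exists l3 => l hl; rewrite [e]splitr ltrD // ?h1 ?h2 //; apply: lam_trans hl.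
Qed.

Lemma net_to0_le (f g : Lam -> K) :
  (forall l, g l <= f l) -> net_to0 le f -> net_to0 le g.
Proof.
move=> hgf hf e e0; have [l0 h0] := hf e e0.
by exists l0 => l hl; apply: le_lt_trans (hgf l) (h0 l hl).
Qed.

Lemma net_to0_mull (c : K) (f : Lam -> K) :
  0 <= c -> (forall l, 0 <= f l) -> net_to0 le f -> net_to0 le (fun l => c * f l).
Proof.
move=> c0 f0 hf e e0; have c1 : 0 < c + 1 by apply: ltr_wpDl.
have [l0 h0] := hf (e / (c + 1)) (divr_gt0 e0 c1); exists l0 => l hl.
apply: (@le_lt_trans _ _ ((c + 1) * f l)); first by rewrite ler_wpM2r // lerDl.
by rewrite mulrC -ltr_pdivlMr // h0.
Qed.

Lemma net_to0_mulr (c : K) (f : Lam -> K) :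
  0 <= c -> (forall l, 0 <= f l) -> net_to0 le f -> net_to0 le (fun l => f l * c).
Proof.
move=> c0 f0 /(net_to0_mull c0 f0) h e /h [l0 hl0].
by exists l0 => l; rewrite mulrC; apply: hl0.
Qed.

Lemma net_to0_both (f g : Lam -> K) : net_to0 le f -> net_to0 le g ->
  forall e : K, 0 < e -> exists l, f l < e /\ g l < e.
Proof.
move=> hf hg e e0; have [l1 h1] := hf _ e0; have [l2 h2] := hg _ e0.
by have [l [l1l l2l]] := lam_upper l1 l2; exists l; rewrite h1 ?h2.
Qed.

Lemma le_net_to0 (u B : K) (f : Lam -> K) :
  (forall l, u <= B + f l) -> net_to0 le f -> u <= B.
Proof.
move=> h hf; apply/ler_addgt0Pr => e e0; have [l0 h0] := hf _ e0.
by apply: le_trans (h l0) _; rewrite lerD2l ltW ?h0.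
Qed.

Lemma eq_net_to0 (V : normedModType K) (x y : V) (f : Lam -> K) :
  (forall l, `|x - y| <= f l) -> net_to0 le f -> x = y.
Proof.
move=> h hf; apply/eqP; rewrite -subr_eq0 -normr_le0.
by apply: le_net_to0 hf => l; rewrite add0r.
Qed.

Let le_scaled (C e : K) : 0 <= C -> 0 < e -> C * (e / (C + 1)) <= e.
Proof.
move=> C0 e0; have C1 : 0 < C + 1 by apply: ltr_wpDl.
apply: (@le_trans _ _ ((C + 1) * (e / (C + 1)))); last by rewrite mulrC divfK ?gt_eqF.
by apply: ler_wpM2r; [rewrite ltW // divr_gt0 | rewrite lerDl ler01].
Qed.

Lemma net_to0_approx (f : Lam -> K) (C : K) : 0 <= C ->
  (forall eta : K, 0 < eta -> exists g : Lam -> K,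
     net_to0 le g /\ forall l, f l <= C * eta + g l) ->
  net_to0 le f.
Proof.
move=> C0 h e e0; have e2 : 0 < e / 2 by rewrite divr_gt0.
have [g [hg hf]] := h _ (divr_gt0 e2 (ltr_wpDl C0 ltr01)).
have [l0 h0] := hg _ e2; exists l0 => l hl; apply: le_lt_trans (hf l) _.
apply: (@lt_le_trans _ _ (e / 2 + e / 2)); last by rewrite -splitr.
by apply: ler_ltD; [apply: le_scaled | apply: h0].
Qed.

Lemma net_cauchy_approx (X : normedModType K) (z : Lam -> X) (C : K) : 0 <= C ->
  (forall eta : K, 0 < eta -> exists g : Lam -> K,
     net_to0 le g /\ forall l m, `|z l - z m| <= C * eta + (g l + g m)) ->
  net_cauchy z.
Proof.
move=> C0 h e e0; have e2 : 0 < e / 2 by rewrite divr_gt0.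
have [g [hg hz]] := h _ (divr_gt0 e2 (ltr_wpDl C0 ltr01)).
have [l0 h0] := hg _ (divr_gt0 e2 (ltr0Sn _ 1)).
exists l0 => l m hl hm; apply: le_lt_trans (hz l m) _.
apply: (@lt_le_trans _ _ (e / 2 + e / 2)); last by rewrite -splitr.
apply: ler_ltD; first exact: le_scaled.
by rewrite [e / 2]splitr; apply: ltrD; apply: h0.
Qed.

End Nets.

Section ClosedSubspace.
Variable R : realType.
Local Notation K := (R[i]).
Local Open Scope classical_set_scope.
Variables (T : completeNormedModType K) (P : T -> Prop).
Hypothesis P0 : P 0.
Hypothesis P_lin : forall (c : K) s1 s2, P s1 -> P s2 -> P (c *: s1 + s2).
Hypothesis P_closed :
  forall s, (forall e : K, 0 < e -> exists s', P s' /\ `|s - s'| < e) -> P s.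

Record subspace := Subspace { subspace_val : T; subspace_mem : `[< P subspace_val >] }.
HB.instance Definition _ := [isSub for subspace_val].
HB.instance Definition _ := [Choice of subspace by <:].

Let mk (s : T) (h : P s) : subspace := Subspace (asboolT h).
Let valP (x : subspace) : P (subspace_val x) := asboolW (subspace_mem x).

Let PD s1 s2 : P s1 -> P s2 -> P (s1 + s2).
Proof. by move=> h1 h2; have := P_lin 1 h1 h2; rewrite scale1r. Qed.
Let PZ c s : P s -> P (c *: s).
Proof. by move=> h; have := P_lin c h P0; rewrite addr0. Qed.
Let PN s : P s -> P (- s).
Proof. by move=> h; have := PZ (-1) h; rewrite scaleN1r. Qed.

Let sub_zero : subspace := mk P0.
Let sub_add (x y : subspace) : subspace := mk (PD (valP x) (valP y)).
Let sub_opp (x : subspace) : subspace := mk (PN (valP x)).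
Let sub_scale (c : K) (x : subspace) : subspace := mk (PZ c (valP x)).

Let sub_addA : associative sub_add.
Proof. by move=> x y z; apply: val_inj; rewrite /= addrA. Qed.
Let sub_addC : commutative sub_add.
Proof. by move=> x y; apply: val_inj; rewrite /= addrC. Qed.
Let sub_add0 : left_id sub_zero sub_add.
Proof. by move=> x; apply: val_inj; rewrite /= add0r. Qed.
Let sub_addN : left_inverse sub_zero sub_opp sub_add.
Proof. by move=> x; apply: val_inj; rewrite /= addNr. Qed.
HB.instance Definition _ := GRing.isZmodule.Build subspace sub_addA sub_addC sub_add0 sub_addN.

Let sub_scaleA a b v : sub_scale a (sub_scale b v) = sub_scale (a * b) v.
Proof. by apply: val_inj; rewrite /= scalerA. Qed.
Let sub_scale1 : left_id 1 sub_scale.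
Proof. by move=> x; apply: val_inj; rewrite /= scale1r. Qed.
Let sub_scaleDr : right_distributive sub_scale +%R.
Proof. by move=> a x y; apply: val_inj; rewrite /= scalerDr. Qed.
Let sub_scaleDl v : {morph sub_scale^~ v : a b / a + b}.
Proof. by move=> a b; apply: val_inj; rewrite /= scalerDl. Qed.
HB.instance Definition _ :=
  GRing.Zmodule_isLmodule.Build K subspace sub_scaleA sub_scale1 sub_scaleDr sub_scaleDl.

Let sub_norm (x : subspace) : K := `|subspace_val x|.
Let sub_normD x y : sub_norm (x + y) <= sub_norm x + sub_norm y.
Proof. exact: ler_normD. Qed.
Let sub_normZ (l : K) x : sub_norm (l *: x) = `|l| * sub_norm x.
Proof. exact: normrZ. Qed.
Let sub_norm0 x : sub_norm x = 0 -> x = 0.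
Proof. by move=> /normr0_eq0 h; apply: val_inj. Qed.
HB.instance Definition _ := Lmodule_isNormed.Build K subspace sub_normD sub_normZ sub_norm0.

Let subspace_complete (F : set_system subspace) : ProperFilter F -> cauchy F -> cvg F.
Proof.
move=> FF /cauchyP hF.
have hT : cvg (subspace_val @ F).
  apply: cauchy_cvg; apply: cauchy_exP => e e0.
  have [x hx] := hF e e0; exists (subspace_val x).
  by apply: (@filterS _ _ _ (ball x e)) hx => // z; rewrite -!ball_normE.
have Plim : P (lim (subspace_val @ F)).
  apply: P_closed => e e0.
  have /filter_ex [x hx] := @cvgr_dist_lt _ _ _ _ (@filter_filter _ _ FF) _ _ hT e e0.
  by exists (subspace_val x); split => //; apply: valP.
apply/cvg_ex; exists (mk Plim); apply/fcvgrPdist_lt => e e0.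
exact: (@cvgr_dist_lt _ _ _ _ (@filter_filter _ _ FF) _ _ hT e e0).
Qed.
HB.instance Definition _ := Uniform_isComplete.Build subspace subspace_complete.

Definition closed_subspace : completeNormedModType K := subspace.

End ClosedSubspace.

Section ProjectiveTensor.
Variable R : realType.
Local Notation K := (R[i]).
Variables (E : lmodType K) (nE : E -> K) (T : completeNormedModType K) (tens : E -> E -> T).
Hypothesis hT : is_proj_tensor nE tens.

Lemma tens_linearl f : islinear (fun e => tens e f).
Proof. by case: hT => [[_ h]] _ _; apply: h. Qed.

Lemma tens_linearr e : islinear (tens e).
Proof. by case: hT => [[h _]] _ _; apply: h. Qed.

Lemma tens_norm e f : `|tens e f| <= nE e * nE f.
Proof. by case: hT. Qed.

Lemma proj_tensor_lift (Z : completeNormedModType K) (beta : E -> E -> Z) (M : K) :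
  bilinear_map beta -> 0 <= M -> (forall e f, `|beta e f| <= M * nE e * nE f) ->
  exists L : T -> Z, [/\ islinear L, (forall e f, L (tens e f) = beta e f) &
                         (forall s, `|L s| <= M * `|s|)].
Proof.
move=> hb hM hn; case: hT => _ _ /(_ Z beta M hb hM hn) [L [hL1 hL2 hL3 _]].
by exists L.
Qed.

Lemma proj_tensor_ext (Z : completeNormedModType K) (L1 L2 : T -> Z) :
  islinear L1 -> bounded_op Num.norm Num.norm L1 ->
  islinear L2 -> bounded_op Num.norm Num.norm L2 ->
  (forall e f, L1 (tens e f) = L2 (tens e f)) -> forall s, L1 s = L2 s.
Proof.
move=> l1 b1 l2 b2 h12.
have [M [M0 hM]] := bounded_op_ge0 (fun _ => normr_ge0 _) (fun _ => normr_ge0 _) b1.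
have hb : bilinear_map (fun e f => L1 (tens e f)).
  split=> [e|f] c u v.
    by rewrite (tens_linearr e) (islinearD _ _ l1) (islinearZ _ _ l1).
  by rewrite (tens_linearl f) (islinearD _ _ l1) (islinearZ _ _ l1).
have hn e f : `|L1 (tens e f)| <= M * nE e * nE f.
  by apply: le_trans (hM _) _; rewrite -mulrA ler_wpM2l ?tens_norm.
case: hT => _ _ /(_ Z _ M hb M0 hn) [L [_ _ _ uniqL]] s.
by rewrite (uniqL L1 l1 b1) // (uniqL L2 l2 b2) // => e f; rewrite h12.
Qed.

(* Elementary tensors span a dense subspace: lift the bilinear map tens into
   the closed subspace P and compare the lift with the identity of T. *)
Lemma proj_tensor_ind (P : T -> Prop) (P0 : P 0)
    (P_lin : forall (c : K) s1 s2, P s1 -> P s2 -> P (c *: s1 + s2))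
    (P_closed : forall s, (forall e : K, 0 < e -> exists s', P s' /\ `|s - s'| < e) -> P s) :
  (forall e f, P (tens e f)) -> forall s, P s.
Proof.
move=> Ptens s.
pose beta e f : closed_subspace P0 P_lin P_closed := Subspace (asboolT (Ptens e f)).
have hb : bilinear_map beta.
  by split=> [e|f] c u v; apply: val_inj; [exact: tens_linearr | exact: tens_linearl].
have hn e f : `|beta e f| <= 1 * nE e * nE f by rewrite mul1r; apply: tens_norm.
have [L [lL hL bL]] := proj_tensor_lift hb ler01 hn.
have <- : subspace_val (L s) = s.
  apply: (@proj_tensor_ext T (fun s => subspace_val (L s)) id).
  - by move=> c u v; rewrite lL.
  - by exists 1 => u; apply: bL.
  - by [].
  - by exists 1 => u; rewrite mul1r.
  - by move=> e f; rewrite hL.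
exact: asboolW (subspace_mem (L s)).
Qed.

End ProjectiveTensor.

Section Bimodule.
Variable R : realType.
Local Notation K := (R[i]).
Variables (A X : completeNormedModType K) (mul : A -> A -> A)
  (lm : A -> X -> X) (rm : X -> A -> X).
Hypothesis hX : banach_bimodule mul lm rm.

Lemma lm_linear a : islinear (lm a). Proof. by case: hX => [[]]. Qed.
Lemma lm_linearl x : islinear (lm^~ x). Proof. by case: hX => [[]]. Qed.
Lemma rm_linear x : islinear (rm x). Proof. by case: hX => _ []. Qed.
Lemma rm_linearl a : islinear (rm^~ a). Proof. by case: hX => _ []. Qed.
Lemma lm_norm a x : `|lm a x| <= `|a| * `|x|. Proof. by case: hX. Qed.
Lemma rm_norm x a : `|rm x a| <= `|x| * `|a|. Proof. by case: hX. Qed.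
Lemma lmM a b x : lm (mul a b) x = lm a (lm b x). Proof. by case: hX => _ _ _ _ []. Qed.
Lemma rmM x a b : rm x (mul a b) = rm (rm x a) b. Proof. by case: hX => _ _ _ _ []. Qed.
Lemma lm_rm a x b : lm a (rm x b) = rm (lm a x) b. Proof. by case: hX => _ _ _ _ []. Qed.

Lemma lmD a x y : lm a (x + y) = lm a x + lm a y. Proof. exact: islinearD (lm_linear a). Qed.
Lemma lmB a x y : lm a (x - y) = lm a x - lm a y. Proof. exact: islinearB (lm_linear a). Qed.
Lemma lmZ a c x : lm a (c *: x) = c *: lm a x. Proof. exact: islinearZ (lm_linear a). Qed.
Lemma lmDl a b x : lm (a + b) x = lm a x + lm b x. Proof. exact: islinearD (lm_linearl x). Qed.
Lemma lmZl c a x : lm (c *: a) x = c *: lm a x. Proof. exact: islinearZ (lm_linearl x). Qed.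
Lemma rmD x y a : rm (x + y) a = rm x a + rm y a. Proof. exact: islinearD (rm_linearl a). Qed.
Lemma rmB x y a : rm (x - y) a = rm x a - rm y a. Proof. exact: islinearB (rm_linearl a). Qed.
Lemma rmZ c x a : rm (c *: x) a = c *: rm x a. Proof. exact: islinearZ (rm_linearl a). Qed.
Lemma rmDr x a b : rm x (a + b) = rm x a + rm x b. Proof. exact: islinearD (rm_linear x). Qed.
Lemma rmZr x c a : rm x (c *: a) = c *: rm x a. Proof. exact: islinearZ (rm_linear x). Qed.

End Bimodule.

Section Unitization.
Variable R : realType.
Local Notation K := (R[i]).
Variables (A X : completeNormedModType K) (mul : A -> A -> A)
  (lm : A -> X -> X) (rm : X -> A -> X).
Hypothesis hA : banach_algebra mul.
Hypothesis hX : banach_bimodule mul lm rm.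
Local Notation um := (unit_mul mul).
Local Notation ul := (unit_lact lm).
Local Notation ur := (unit_ract rm).
Local Notation un := (@unit_norm R A).

Definition unit_one : A * K := (0, 1).
Definition unit_emb (a : A) : A * K := (a, 0).

Lemma unit_mulr1 u : um u unit_one = u.
Proof.
have mulr0 : mul u.1 0 = 0 by case: hA => [[hl _]] _ _; apply: islinear0.
by rewrite /unit_mul /= mulr0 scaler0 addr0 scale1r add0r mulr1 -surjective_pairing.
Qed.

Lemma unit_norm_ge0 u : 0 <= un u.
Proof. by rewrite /unit_norm addr_ge0. Qed.

Lemma unit_normN u : un (- u) = un u.
Proof. by rewrite /unit_norm /= !normrN. Qed.

Lemma unit_lact_linear u : islinear (ul u).
Proof. by move=> c x y; rewrite /unit_lact (lmD hX) (lmZ hX) !scalerDr !scalerA mulrC addrACA. Qed.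

Lemma unit_lact_linearl x : islinear (ul^~ x).
Proof.
move=> c u v; rewrite /unit_lact /= (lmDl hX) (lmZl hX).
by rewrite scalerDl -scalerA scalerDr addrACA.
Qed.

Lemma unit_ract_linear x : islinear (ur x).
Proof.
move=> c u v; rewrite /unit_ract /= (rmDr hX) (rmZr hX).
by rewrite scalerDl -scalerA scalerDr addrACA.
Qed.

Lemma unit_ract_linearl u : islinear (ur^~ u).
Proof. by move=> c x y; rewrite /unit_ract (rmD hX) (rmZ hX) !scalerDr !scalerA mulrC addrACA. Qed.

Lemma unit_lactA u v x : ul u (ul v x) = ul (um u v) x.
Proof.
rewrite /unit_lact /unit_mul /= (lmD hX) (lmZ hX) !(lmDl hX) !(lmZl hX) (lmM hX).
by rewrite !scalerDr !scalerA addrA; congr (_ + _); rewrite addrAC.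
Qed.

Lemma unit_ractA x u v : ur (ur x u) v = ur x (um u v).
Proof.
rewrite /unit_ract /unit_mul /= (rmD hX) (rmZ hX) !(rmDr hX) !(rmZr hX) (rmM hX).
by rewrite !scalerDr !scalerA [v.2 * u.2]mulrC !addrA.
Qed.

Lemma unit_lact_ract u x v : ul u (ur x v) = ur (ul u x) v.
Proof.
rewrite /unit_ract /unit_lact /= (lmD hX) (lmZ hX) (rmD hX) (rmZ hX) !scalerDr !scalerA.
rewrite (lm_rm hX) [v.2 * u.2]mulrC !addrA; congr (_ + _).
by rewrite addrAC -!addrA; congr (_ + _); rewrite addrC.
Qed.

Lemma unit_lact1 x : ul unit_one x = x.
Proof. by rewrite /unit_lact /= (islinear0 (lm_linearl hX x)) add0r scale1r. Qed.

Lemma unit_ract1 x : ur x unit_one = x.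
Proof. by rewrite /unit_ract /= (islinear0 (rm_linear hX x)) add0r scale1r. Qed.

Lemma unit_lact_emb a x : ul (unit_emb a) x = lm a x.
Proof. by rewrite /unit_lact /= scale0r addr0. Qed.

Lemma unit_ract_emb x a : ur x (unit_emb a) = rm x a.
Proof. by rewrite /unit_ract /= scale0r addr0. Qed.

Lemma unit_lact_norm u x : `|ul u x| <= un u * `|x|.
Proof.
rewrite /unit_lact /unit_norm mulrDl (le_trans (ler_normD _ _)) // lerD ?(lm_norm hX) //.
by rewrite normrZ.
Qed.

Lemma unit_ract_norm x u : `|ur x u| <= `|x| * un u.
Proof.
rewrite /unit_ract /unit_norm mulrDr (le_trans (ler_normD _ _)) // lerD ?(rm_norm hX) //.
by rewrite normrZ mulrC.
Qed.

End Unitization.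

Section LieDerivations.
Variable R : realType.
Local Notation K := (R[i]).
Variables (A X : completeNormedModType K) (mul : A -> A -> A)
  (lm : A -> X -> X) (rm : X -> A -> X).
Hypothesis hX : banach_bimodule mul lm rm.

Lemma derivation_lie (d : A -> X) :
  is_derivation mul lm rm d -> is_lie_derivation mul lm rm d.
Proof. by case=> dlin dM; split=> // a b; rewrite (islinearB _ _ dlin) !dM opprD addrA. Qed.

Lemma lie_derivationB (D d : A -> X) :
  is_lie_derivation mul lm rm D -> is_lie_derivation mul lm rm d ->
  is_lie_derivation mul lm rm (fun a => D a - d a).
Proof.
case=> Dlin DL [dlin dL]; split=> [|a b]; first exact: islinear_sub.
have subrDD (x y x' y' : X) : (x + y) - (x' + y') = (x - x') + (y - y').
  by rewrite opprD addrACA.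
have subrNN (x x' : X) : - x - - x' = - (x - x') by rewrite opprB opprK addrC.
rewrite DL dL !(rmB hX) !(lmB hX); set rhs := (X in _ = X).
by rewrite !subrDD !subrNN.
Qed.

Lemma central_lie_derivation_commutator (tau : A -> X) :
  is_lie_derivation mul lm rm tau -> (forall a, in_center lm rm (tau a)) ->
  forall a b, tau (mul a b - mul b a) = 0.
Proof. by case=> _ tauL central a b; rewrite tauL !central addrK subrr. Qed.

End LieDerivations.

Section InnerDerivationLimits.
Variable R : realType.
Local Notation K := (R[i]).
Variables (A X : completeNormedModType K) (mul : A -> A -> A)
  (lm : A -> X -> X) (rm : X -> A -> X).
Hypothesis hX : banach_bimodule mul lm rm.
Variables (Lam : Type) (le : Lam -> Lam -> Prop) (x : Lam -> X) (d : A -> X).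
Hypothesis hdir : directed le.
Hypothesis x_bounded : net_bounded Num.norm x.
Hypothesis d_lim : forall a, net_to0 le (fun l => `|d a - (lm a (x l) - rm (x l) a)|).

Let ad a l := lm a (x l) - rm (x l) a.
Let err a l := `|d a - ad a l|.
Let err_ge0 a l : 0 <= err a l. Proof. exact: normr_ge0. Qed.
Let err_to0 a : net_to0 le (err a). Proof. exact: d_lim. Qed.

Lemma inner_limit_linear : islinear d.
Proof.
move=> c a b; set e := c *: a + b.
apply: (eq_net_to0 hdir (f := fun l => err e l + (`|c| * err a l + err b l))); last first.
  apply: (net_to0D hdir (err_to0 e)); apply: (net_to0D hdir _ (err_to0 b)).
  exact: net_to0_mull (normr_ge0 c) (err_ge0 a) (err_to0 a).
have adZD l : ad e l = c *: ad a l + ad b l.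
  by rewrite /ad (lm_linearl hX) (rm_linear hX) scalerBr opprD addrACA.
have subrZD (u u' v v' : X) : c *: u + v - (c *: u' + v') = c *: (u - u') + (v - v').
  by rewrite scalerBr opprD addrACA.
move=> l; rewrite -(subrBB _ (c *: ad a l + ad b l)) -{1}adZD subrZD.
apply: le_trans (ler_normB _ _) _; apply: lerD => //.
by apply: le_trans (ler_normD _ _) _; rewrite normrZ.
Qed.

Lemma inner_limit_derivation : is_derivation mul lm rm d.
Proof.
split; first exact: inner_limit_linear.
move=> a b; set e := mul a b.
apply: (eq_net_to0 hdir (f := fun l => err e l + (err a l * `|b| + `|a| * err b l))); last first.
  apply: (net_to0D hdir (err_to0 e)); apply: (net_to0D hdir).
    exact: net_to0_mulr (normr_ge0 b) (err_ge0 a) (err_to0 a).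
  exact: net_to0_mull (normr_ge0 a) (err_ge0 b) (err_to0 b).
have adM l : ad e l = rm (ad a l) b + lm a (ad b l).
  rewrite /ad (rmB hX) (lmB hX) (lmM hX) (rmM hX) (lm_rm hX).
  by rewrite [RHS]addrC addrA subrK.
have subrDD (u u' v v' : X) :
    rm u b + lm a v - (rm u' b + lm a v') = rm (u - u') b + lm a (v - v').
  by rewrite (rmB hX) (lmB hX) opprD addrACA.
move=> l; rewrite -(subrBB _ (rm (ad a l) b + lm a (ad b l))) -{1}adM subrDD.
apply: le_trans (ler_normB _ _) _; apply: lerD => //.
by apply: le_trans (ler_normD _ _) _; rewrite lerD ?(rm_norm hX) ?(lm_norm hX).
Qed.

Lemma inner_limit_bounded : bounded_op Num.norm Num.norm d.
Proof.
have [M [M0 hM]] := net_bounded_ge0 hdir x_bounded.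
exists (M + M) => a; apply: (le_net_to0 hdir _ (err_to0 a)) => l.
rewrite addrC; apply: le_trans (_ : _ <= err a l + `|ad a l|) _.
  by rewrite -{1}(subrK (ad a l) (d a)) ler_normD.
rewrite lerD2l mulrDl; apply: le_trans (ler_normB _ _) _.
rewrite lerD //; [apply: le_trans (lm_norm hX _ _) _ | apply: le_trans (rm_norm hX _ _) _].
  by rewrite mulrC ler_wpM2r.
by rewrite ler_wpM2r.
Qed.

End InnerDerivationLimits.

Section LieDecomposition.
Variable R : realType.
Local Notation K := (R[i]).
Local Open Scope classical_set_scope.
Variables (A X T : completeNormedModType K)
  (mul : A -> A -> A) (lm : A -> X -> X) (rm : X -> A -> X).
Local Notation um := (unit_mul mul).
Local Notation ul := (unit_lact lm).
Local Notation ur := (unit_ract rm).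
Local Notation un := (@unit_norm R A).
Local Notation bounded := (bounded_op Num.norm Num.norm).
Hypothesis hA : banach_algebra mul.
Hypothesis hX : banach_bimodule mul lm rm.
Variable tens : A * K -> A * K -> T.
Hypothesis hT : is_proj_tensor un tens.
Variables (lact ract : A * K -> T -> T) (flip : T -> T) (pi : T -> A * K).
Hypothesis hlact : forall u,
  [/\ islinear (lact u), bounded (lact u) & forall v w, lact u (tens v w) = tens (um u v) w].
Hypothesis hract : forall u,
  [/\ islinear (ract u), bounded (ract u) & forall v w, ract u (tens v w) = tens v (um w u)].
Hypothesis hflip :
  [/\ islinear flip, bounded flip & forall v w, flip (tens v w) = tens w v].
Hypothesis hpi :
  [/\ islinear pi, bounded_op Num.norm un pi & forall v w, pi (tens v w) = um v w].
Variables (psi : X -> T -> X) (D : A -> X) (Phi : T -> X).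
Hypothesis hpsi : forall x,
  [/\ islinear (psi x), bounded (psi x) & forall v w, psi x (tens v w) = ur (ul v x) w].
Hypothesis hD : is_lie_derivation mul lm rm D.
Hypothesis hDb : bounded D.
Hypothesis hPhi :
  [/\ islinear Phi, bounded Phi & forall v w, Phi (tens v w) = ul v (D w.1)].

Let lact_lin u : islinear (lact u). Proof. by case: (hlact u). Qed.
Let lact_bnd u : bounded (lact u). Proof. by case: (hlact u). Qed.
Let lact_tens u v w : lact u (tens v w) = tens (um u v) w. Proof. by case: (hlact u). Qed.
Let ract_lin u : islinear (ract u). Proof. by case: (hract u). Qed.
Let ract_bnd u : bounded (ract u). Proof. by case: (hract u). Qed.
Let ract_tens u v w : ract u (tens v w) = tens v (um w u). Proof. by case: (hract u). Qed.
Let flip_lin : islinear flip. Proof. by case: hflip. Qed.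
Let flip_bnd : bounded flip. Proof. by case: hflip. Qed.
Let flip_tens v w : flip (tens v w) = tens w v. Proof. by case: hflip. Qed.
Let pi_lin : islinear pi. Proof. by case: hpi. Qed.
Let pi_bnd : bounded_op Num.norm un pi. Proof. by case: hpi. Qed.
Let pi_tens v w : pi (tens v w) = um v w. Proof. by case: hpi. Qed.
Let psi_lin x : islinear (psi x). Proof. by case: (hpsi x). Qed.
Let psi_bnd x : bounded (psi x). Proof. by case: (hpsi x). Qed.
Let psi_tens x v w : psi x (tens v w) = ur (ul v x) w. Proof. by case: (hpsi x). Qed.
Let Phi_lin : islinear Phi. Proof. by case: hPhi. Qed.
Let Phi_bnd : bounded Phi. Proof. by case: hPhi. Qed.
Let Phi_tens v w : Phi (tens v w) = ul v (D w.1). Proof. by case: hPhi. Qed.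
Let D_lin : islinear D. Proof. by case: hD. Qed.

Let ul_lin u : islinear (ul u). Proof. exact: unit_lact_linear hX u. Qed.
Let ul_linl x : islinear (ul^~ x). Proof. exact: unit_lact_linearl hX x. Qed.
Let ur_lin x : islinear (ur x). Proof. exact: unit_ract_linear hX x. Qed.
Let ur_linl u : islinear (ur^~ u). Proof. exact: unit_ract_linearl hX u. Qed.
Let ul_bnd u : bounded (ul u).
Proof. by exists (un u) => x; apply: (unit_lact_norm hX). Qed.
Let ur_bndl u : bounded (ur^~ u).
Proof. by exists (un u) => x; rewrite mulrC; apply: (unit_ract_norm hX). Qed.
Let ul_bndl x : bounded_op un Num.norm (ul^~ x).
Proof. by exists `|x| => u; rewrite mulrC; apply: (unit_lact_norm hX). Qed.
Let bnd_comp (E F G : normedModType K) (f : F -> G) (g : E -> F) :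
  bounded f -> bounded g -> bounded (fun s => f (g s)).
Proof. by apply: bounded_op_comp => *; apply: normr_ge0. Qed.
Let bnd_add (E F : normedModType K) (f g : E -> F) :
  bounded f -> bounded g -> bounded (fun s => f s + g s).
Proof. by apply: bounded_op_add => *; apply: normr_ge0. Qed.
Let bnd_sub (E F : normedModType K) (f g : E -> F) :
  bounded f -> bounded g -> bounded (fun s => f s - g s).
Proof. by apply: bounded_op_sub => *; apply: normr_ge0. Qed.

Lemma unit_lie u v :
  D (um u v - um v u).1 = ur (D u.1) v + ul u (D v.1) - ur (D v.1) u - ul v (D u.1).
Proof.
have -> : (um u v - um v u).1 = mul u.1 v.1 - mul v.1 u.1.
  rewrite /unit_mul /=.
  set a := mul u.1 v.1; set b := u.2 *: v.1; set c := v.2 *: u.1; set d := mul v.1 u.1.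
  by rewrite -[d + c + b]addrA [c + b]addrC [d + _]addrC opprD addrA -[a + b + c]addrA addrK.
case: hD => _ ->; rewrite /unit_ract /unit_lact.
set P := rm _ v.1; set Q := lm u.1 _; set S := rm _ u.1; set T0 := lm v.1 _.
set e1 := v.2 *: _; set e2 := u.2 *: _.
rewrite [- (T0 + e1)]opprD !addrA [S + e2]addrC opprD addrA addrK.
by rewrite [_ - T0 - e1]addrAC [_ - S - e1]addrAC [P + e1 + Q - e1]addrAC addrK.
Qed.

Lemma psi_norm x s : `|psi x s| <= `|x| * `|s|.
Proof.
have hb : bilinear_map (fun u v => ur (ul u x) v).
  by split=> [u|v]; [exact: ur_lin | exact: islinear_comp (ur_linl v) (ul_linl x)].
have hn u v : `|ur (ul u x) v| <= `|x| * un u * un v.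
  apply: le_trans (unit_ract_norm hX _ _) _.
  by rewrite ler_wpM2r ?unit_norm_ge0 // mulrC (unit_lact_norm hX).
have [L [lL hL bL]] := proj_tensor_lift hT hb (normr_ge0 x) hn.
have -> : psi x s = L s.
  by apply: (proj_tensor_ext hT) => // [|e f]; [exists `|x|; apply: bL | rewrite psi_tens hL].
exact: bL.
Qed.

Lemma psiB x y s : psi (x - y) s = psi x s - psi y s.
Proof.
move: s; apply: (proj_tensor_ext hT) => //.
- exact: islinear_sub.
- exact: bnd_sub.
- by move=> u v; rewrite !psi_tens (islinearB _ _ (ul_lin u)) (islinearB _ _ (ur_linl v)).
Qed.

Lemma unit_lact_psi u x s : ul u (psi x s) = psi x (lact u s).
Proof.
move: s; apply: (proj_tensor_ext hT).
- exact: islinear_comp (ul_lin u) (psi_lin x).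
- exact: bnd_comp (ul_bnd u) (psi_bnd x).
- exact: islinear_comp (psi_lin x) (lact_lin u).
- exact: bnd_comp (psi_bnd x) (lact_bnd u).
- by move=> v w; rewrite lact_tens !psi_tens (unit_lact_ract hX) (unit_lactA hX).
Qed.

Lemma unit_ract_psi u x s : ur (psi x s) u = psi x (ract u s).
Proof.
move: s; apply: (proj_tensor_ext hT).
- exact: islinear_comp (ur_linl u) (psi_lin x).
- exact: bnd_comp (ur_bndl u) (psi_bnd x).
- exact: islinear_comp (psi_lin x) (ract_lin u).
- exact: bnd_comp (psi_bnd x) (ract_bnd u).
- by move=> v w; rewrite ract_tens !psi_tens (unit_ractA hX).
Qed.

Lemma Phi_lact a s : Phi (lact (unit_emb a) s) = lm a (Phi s).
Proof.
rewrite -(unit_lact_emb lm); move: s; apply: (proj_tensor_ext hT).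
- exact: islinear_comp Phi_lin (lact_lin _).
- exact: bnd_comp Phi_bnd (lact_bnd _).
- exact: islinear_comp (ul_lin _) Phi_lin.
- exact: bnd_comp (ul_bnd _) Phi_bnd.
- by move=> v w; rewrite lact_tens !Phi_tens (unit_lactA hX).
Qed.

Let flipped_act (act : A * K -> T -> T) :
  (forall u, islinear (act u)) -> (forall u, bounded (act u)) ->
  forall u, islinear (fun s => flip (act u (flip s))) /\ bounded (fun s => flip (act u (flip s))).
Proof.
move=> hl hb u; split; first exact: islinear_comp flip_lin (islinear_comp (hl u) flip_lin).
exact: bnd_comp flip_bnd (bnd_comp (hb u) flip_bnd).
Qed.

(* On u (x) v both sides equal u D(a) v: this is the Lie identity for the pair (a, v),
   acted on by u from the left. *)
Lemma psi_D_expansion a s :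
  psi (D a) s = ul (pi s) (D a) + Phi (flip (lact (unit_emb a) (flip s)))
    - Phi (flip (ract (unit_emb a) (flip s))) - Phi (ract (unit_emb a) s)
    + ur (Phi s) (unit_emb a).
Proof.
set x := D a; set ea := unit_emb a.
have [fl_lin fl_bnd] := flipped_act lact_lin lact_bnd ea.
have [fr_lin fr_bnd] := flipped_act ract_lin ract_bnd ea.
move: s; apply: (proj_tensor_ext hT) => //.
- apply: islinear_add; last exact: islinear_comp (ur_linl ea) Phi_lin.
  apply: islinear_sub; last exact: islinear_comp Phi_lin (ract_lin ea).
  apply: islinear_sub; last exact: islinear_comp Phi_lin fr_lin.
  apply: islinear_add; last exact: islinear_comp Phi_lin fl_lin.
  exact: islinear_comp (ul_linl x) pi_lin.
- apply: bnd_add; last exact: bnd_comp (ur_bndl ea) Phi_bnd.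
  apply: bnd_sub; last exact: bnd_comp Phi_bnd (ract_bnd ea).
  apply: bnd_sub; last exact: bnd_comp Phi_bnd fr_bnd.
  apply: bnd_add; last exact: bnd_comp Phi_bnd fl_bnd.
  apply: bounded_op_comp (ul_bndl x) pi_bnd => *;
    [exact: normr_ge0 | exact: unit_norm_ge0 | exact: normr_ge0].
move=> u v; rewrite !flip_tens lact_tens ract_tens !flip_tens ract_tens !Phi_tens psi_tens pi_tens.
have reorder (Y A0 p B q C : X) : p - q = Y + B - C - A0 -> Y = A0 + p - B - q + C.
  move=> h; rewrite -[A0 + p]addrC [p + A0 - B - q]addrAC [p + A0 - q]addrAC h.
  by rewrite subrK [Y + B - C - B]addrAC addrK subrK.
apply: reorder.
rewrite -(islinearB _ _ (ul_lin u)) -(islinearB _ _ D_lin).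
rewrite -[(um ea v).1 - _]/((um ea v - um v ea).1) unit_lie /=.
rewrite !(islinearB _ _ (ul_lin u)) (islinearD _ _ (ul_lin u)).
by rewrite !(unit_lact_ract hX) !(unit_lactA hX).
Qed.

Lemma psi_inner y a s : psi (lm a y - rm y a) s =
  psi y (flip (ract (unit_emb a) (flip s))) - psi y (flip (lact (unit_emb a) (flip s))).
Proof.
set ea := unit_emb a.
have [fl_lin fl_bnd] := flipped_act lact_lin lact_bnd ea.
have [fr_lin fr_bnd] := flipped_act ract_lin ract_bnd ea.
move: s; apply: (proj_tensor_ext hT) => //.
- by apply: islinear_sub; apply: islinear_comp.
- by apply: bnd_sub; apply: bnd_comp.
move=> u v; rewrite !flip_tens lact_tens ract_tens !flip_tens !psi_tens.
rewrite -(unit_ract_emb rm y a) -(unit_lact_emb lm a y) -/ea.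
by rewrite (islinearB _ _ (ul_lin u)) (islinearB _ _ (ur_linl v)) (unit_lact_ract hX)
  (unit_lactA hX) (unit_ractA hX).
Qed.

Variables (Lam : Type) (le : Lam -> Lam -> Prop) (t : Lam -> T).
Hypothesis hLam : directed le.
Hypothesis t_sym : forall l, flip (t l) = t l.
Hypothesis t_diag : forall u, net_to0 le (fun l => `|lact u (t l) - ract u (t l)|).
Hypothesis t_unit : forall u, net_to0 le (fun l => un (um (pi (t l)) u - u)).
Hypothesis psi_t_bounded : forall x, net_bounded Num.norm (fun l => psi x (t l)).
Hypothesis Phi_t_bounded : net_bounded Num.norm (fun l => Phi (t l)).

Definition commT a s := lact (unit_emb a) s - ract (unit_emb a) s.
Definition diag_psi a l := psi (D a) (t l).
Definition diag_inner a l := lm a (Phi (t l)) - rm (Phi (t l)) a.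
Definition diag_rem a l := ul (pi (t l) - unit_one A) (D a)
  + (Phi (flip (commT a (t l))) + Phi (commT a (t l))).

Lemma diag_psiE a l : diag_psi a l = D a + diag_rem a l - diag_inner a l.
Proof.
rewrite /diag_psi psi_D_expansion t_sym /diag_rem /diag_inner /commT.
rewrite (islinearB _ _ flip_lin) !(islinearB _ _ Phi_lin) Phi_lact (unit_ract_emb rm).
rewrite (islinearB _ _ (ul_linl (D a))) (unit_lact1 hX).
set U := ul _ _; set F1 := Phi (flip _); set F2 := Phi (flip _); set G := Phi (ract _ _).
rewrite addrA [D a + (U - D a)]addrC subrK opprB.
by rewrite [lm a _ - G]addrC [rm _ a - _]addrC !addrA addrK.
Qed.

Lemma pi_diag_to1 : net_to0 le (fun l => un (pi (t l) - unit_one A)).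
Proof.
move=> e e0; have [l0 h] := t_unit (unit_one A) e0.
by exists l0 => l hl; have := h l hl; rewrite (unit_mulr1 hA).
Qed.

Lemma commT_to0 a : net_to0 le (fun l => `|commT a (t l)|).
Proof. exact: t_diag. Qed.

Lemma diag_rem_to0 a : net_to0 le (fun l => `|diag_rem a l|).
Proof.
have nn (V : normedModType K) (v : V) : 0 <= `|v| by apply: normr_ge0.
have [MP [MP0 hMP]] := bounded_op_ge0 (@nn _) (@nn _) Phi_bnd.
have [Mf [Mf0 hMf]] := bounded_op_ge0 (@nn _) (@nn _) flip_bnd.
apply: (net_to0_le (f := fun l => `|D a| * un (pi (t l) - unit_one A) +
   (MP * Mf * `|commT a (t l)| + MP * `|commT a (t l)|))).
- move=> l; apply: le_trans (ler_normD _ _) _; apply: lerD.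
    by rewrite mulrC (unit_lact_norm hX).
  apply: le_trans (ler_normD _ _) _; apply: lerD; last exact: hMP.
  by apply: le_trans (hMP _) _; rewrite -mulrA ler_wpM2l.
- apply: (net_to0D hLam).
    exact: net_to0_mull (nn _ _) (fun l => unit_norm_ge0 _) pi_diag_to1.
  apply: (net_to0D hLam).
    exact: net_to0_mull (mulr_ge0 MP0 Mf0) (fun l => nn _ _) (commT_to0 a).
  exact: net_to0_mull MP0 (fun l => nn _ _) (commT_to0 a).
Qed.

Definition psi_defect s z := psi z s - ur z (pi s).

Lemma psi_defect_linear z : islinear (psi_defect^~ z).
Proof.
by move=> c s1 s2; rewrite /psi_defect (psi_lin z) pi_lin (ur_lin z) scalerBr opprD addrACA.
Qed.

Lemma psi_defect_bounded :
  exists M : K, 0 <= M /\ forall s z, `|psi_defect s z| <= M * `|z| * `|s|.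
Proof.
have [Mpi [Mpi0 hMpi]] :=
  bounded_op_ge0 (fun _ => normr_ge0 _) (fun _ => unit_norm_ge0 _) pi_bnd.
exists (1 + Mpi); split=> [|s z]; first by rewrite addr_ge0.
rewrite mulrDl mul1r mulrDl; apply: le_trans (ler_normB _ _) _; rewrite lerD ?psi_norm //.
apply: le_trans (unit_ract_norm hX _ _) _.
by rewrite [Mpi * _]mulrC -mulrA ler_wpM2l.
Qed.

Lemma psi_defect_tens z u v : psi_defect (tens u v) z = ur (ul u z - ur z u) v.
Proof. by rewrite /psi_defect psi_tens pi_tens -(unit_ractA hX) (islinearB _ _ (ur_linl v)). Qed.

(* On u (x) v the defect at z = psi_{D a}(t l) is (u z - z u) v = psi_{D a}(u t l - t l u) v;
   the bound on these z makes the set of admissible s closed. *)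
Lemma psi_defect_to0 a s : net_to0 le (fun l => `|psi_defect s (diag_psi a l)|).
Proof.
have [Kz [Kz0 hKz]] := net_bounded_ge0 hLam (psi_t_bounded (D a)).
have [M [M0 hM]] := psi_defect_bounded.
move: s; apply: (proj_tensor_ind hT).
- move=> e e0; case: hLam => [[l0]] _ _ _; exists l0 => l _.
  rewrite /psi_defect (islinear0 (psi_lin _)) (islinear0 pi_lin).
  by rewrite (islinear0 (ur_lin _)) subrr normr0.
- move=> c s1 s2 /= h1 h2.
  apply: (net_to0_le (f := fun l =>
    `|c| * `|psi_defect s1 (diag_psi a l)| + `|psi_defect s2 (diag_psi a l)|)).
    by move=> l; rewrite psi_defect_linear; apply: le_trans (ler_normD _ _) _; rewrite normrZ.
  apply: (net_to0D hLam _ h2).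
  exact: net_to0_mull (normr_ge0 c) (fun _ => normr_ge0 _) h1.
- move=> s hs; apply: (net_to0_approx (C := M * Kz)); first exact: mulr_ge0.
  move=> eta eta0; have [s' [hs' ss']] := hs _ eta0.
  exists (fun l => `|psi_defect s' (diag_psi a l)|); split => // l.
  have -> : psi_defect s (diag_psi a l) =
            psi_defect (s - s') (diag_psi a l) + psi_defect s' (diag_psi a l).
    by have := psi_defect_linear (diag_psi a l) 1 (s - s') s'; rewrite !scale1r subrK.
  apply: le_trans (ler_normD _ _) _; rewrite lerD2r; apply: le_trans (hM _ _) _.
  apply: ler_pM; [exact: mulr_ge0 | exact: normr_ge0 | | exact: ltW].
  by apply: ler_wpM2l; last exact: hKz.
- move=> u v.
  apply: (net_to0_le (f := fun l => `|D a| * un v * `|lact u (t l) - ract u (t l)|)).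
    move=> l; rewrite psi_defect_tens; apply: le_trans (unit_ract_norm hX _ _) _.
    rewrite /diag_psi (unit_lact_psi u) (unit_ract_psi u) -(islinearB _ _ (psi_lin _)).
    by rewrite mulrAC ler_wpM2r ?unit_norm_ge0 ?psi_norm.
  exact: net_to0_mull (mulr_ge0 (normr_ge0 _) (unit_norm_ge0 _)) (fun _ => normr_ge0 _) (t_diag u).
Qed.

Lemma psi_inner_norm y a s : flip s = s ->
  `|psi (lm a y - rm y a) s| <= `|y| * `|flip (commT a s)|.
Proof.
move=> hs; rewrite psi_inner hs -(islinearB _ _ (psi_lin y)) -(islinearB _ _ flip_lin).
by rewrite -opprB (islinearN _ flip_lin) (islinearN _ (psi_lin y)) normrN psi_norm.
Qed.

Lemma psi_diag_diff_norm a l m s : flip s = s ->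
  `|psi (diag_psi a l - diag_psi a m) s| <=
    `|s| * (`|diag_rem a l| + `|diag_rem a m|) + `|Phi (t l) - Phi (t m)| * `|flip (commT a s)|.
Proof.
move=> hs; set Y := Phi (t l) - Phi (t m).
have subrBA (x1 x2 y1 y2 : X) : (x1 - x2) - (y1 - y2) = (x1 - y1) - (x2 - y2).
  by rewrite !opprB addrACA [RHS]addrACA [- y1 - x2]addrC.
have subrDBA (x q q' i i' : X) : (x + q - i) - (x + q' - i') = (q - q') - (i - i').
  rewrite -[x + q - i]addrA -[x + q' - i']addrA [x + (q - i)]addrC addrKA.
  exact: subrBA.
have -> : diag_psi a l - diag_psi a m = (diag_rem a l - diag_rem a m) - (lm a Y - rm Y a).
  by rewrite !diag_psiE subrDBA (lmB hX) (rmB hX); congr (_ - _); apply: subrBA.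
rewrite psiB; apply: le_trans (ler_normB _ _) _; apply: lerD; last exact: psi_inner_norm.
by apply: le_trans (psi_norm _ _) _; rewrite mulrC ler_wpM2l ?ler_normB.
Qed.

Lemma diag_psi_cauchy a : net_cauchy le (diag_psi a).
Proof.
have nn (V : normedModType K) (v : V) : 0 <= `|v| by apply: normr_ge0.
have [Kz [Kz0 hKz]] := net_bounded_ge0 hLam (psi_t_bounded (D a)).
have [KP [KP0 hKP]] := net_bounded_ge0 hLam Phi_t_bounded.
have [Mf [Mf0 hMf]] := bounded_op_ge0 (@nn _) (@nn _) flip_bnd.
apply: (net_cauchy_approx (C := Kz + Kz + (KP + KP) * Mf)).
  by rewrite addr_ge0 ?mulr_ge0 ?addr_ge0.
move=> eta eta0.
have [nu [pi_nu comm_nu]] := net_to0_both hLam pi_diag_to1 (commT_to0 a) eta0.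
set s := t nu; set p := pi s.
exists (fun l => `|psi_defect s (diag_psi a l)| + `|s| * `|diag_rem a l|); split.
  apply: (net_to0D hLam (psi_defect_to0 a s)).
  exact: net_to0_mull (nn _ s) (fun l => nn _ _) (diag_rem_to0 a).
move=> l m; set w := diag_psi a l - diag_psi a m.
have unit_step : `|w - ur w p| <= (Kz + Kz) * eta.
  rewrite -{1}[w](unit_ract1 hX) -(islinearB _ _ (ur_lin w)) -opprB.
  apply: le_trans (unit_ract_norm hX _ _) _; rewrite unit_normN.
  apply: ler_pM; [exact: nn | exact: unit_norm_ge0 | | exact: ltW].
  by apply: le_trans (ler_normB _ _) _; apply: lerD; apply: hKz.
have swap_step : `|ur w p - psi w s| <=
                 `|psi_defect s (diag_psi a l)| + `|psi_defect s (diag_psi a m)|.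
  rewrite /w (islinearB _ _ (ur_linl p)) psiB.
  have -> (x1 x2 y1 y2 : X) : x1 - x2 - (y1 - y2) = - (y1 - x1) + (y2 - x2).
    by rewrite !opprB addrACA [RHS]addrACA [- y1 + _]addrC.
  by apply: le_trans (ler_normD _ _) _; rewrite normrN.
have psi_step : `|psi w s| <=
                `|s| * (`|diag_rem a l| + `|diag_rem a m|) + (KP + KP) * Mf * eta.
  apply: le_trans (psi_diag_diff_norm _ _ _ (t_sym nu)) _; rewrite lerD2l -mulrA.
  apply: ler_pM => //; first by apply: le_trans (ler_normB _ _) _; apply: lerD; apply: hKP.
  by apply: le_trans (hMf _) _; rewrite ler_wpM2l // ltW.
have tele (x y z : X) : x = (x - y) + (y - z) + z by rewrite addrA !subrK.
rewrite [w](tele _ (ur w p) (psi w s)).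
apply: le_trans (ler_normD _ _) _; apply: le_trans (lerD (ler_normD _ _) (lexx _)) _.
apply: le_trans (lerD (lerD unit_step swap_step) psi_step) _.
by rewrite le_eqVlt; apply/orP; left; apply/eqP; ring.
Qed.

Definition central_part a := lim (diag_psi a @ net_filter le).
Definition derivation_part a := D a - central_part a.

Lemma central_part_approx a : net_to0 le (fun l => `|central_part a - diag_psi a l|).
Proof. exact: (net_cauchy_lim hLam (diag_psi_cauchy a)). Qed.

Lemma derivation_part_approx a :
  net_to0 le (fun l => `|derivation_part a - (lm a (Phi (t l)) - rm (Phi (t l)) a)|).
Proof.
apply: (net_to0_le _ (net_to0D hLam (central_part_approx a) (diag_rem_to0 a))) => l.
rewrite -/(diag_inner a l).
have -> : derivation_part a - diag_inner a l =
          (diag_psi a l - central_part a) - diag_rem a l.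
  rewrite diag_psiE /derivation_part [RHS]addrAC.
  by rewrite [D a + _ - _ - _]addrAC addrK addrAC.
by apply: le_trans (ler_normB _ _) _; rewrite distrC.
Qed.

Lemma central_part_central a : in_center lm rm (central_part a).
Proof.
move=> c; set z := diag_psi a; set tau := central_part a.
apply: (eq_net_to0 hLam (f := fun l =>
  `|c| * `|tau - z l| + `|D a| * `|commT c (t l)| + `|tau - z l| * `|c|)); last first.
  apply: (net_to0D hLam).
    apply: (net_to0D hLam).
      exact: net_to0_mull (normr_ge0 c) (fun _ => normr_ge0 _) (central_part_approx a).
    exact: net_to0_mull (normr_ge0 _) (fun _ => normr_ge0 _) (commT_to0 c).
  exact: net_to0_mulr (normr_ge0 c) (fun _ => normr_ge0 _) (central_part_approx a).
move=> l.
have split (x y u v : X) : x - y = (x - u) + (u - v) - (y - v).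
  by rewrite addrA subrK subrBB.
rewrite (split (lm c tau) (rm tau c) (lm c (z l)) (rm (z l) c)) -(lmB hX) -(rmB hX).
have -> : lm c (z l) - rm (z l) c = psi (D a) (commT c (t l)).
  rewrite /z /diag_psi -(unit_lact_emb lm c) -(unit_ract_emb rm _ c).
  by rewrite unit_lact_psi unit_ract_psi -(islinearB _ _ (psi_lin _)).
apply: le_trans (ler_normB _ _) _; apply: lerD; last exact: (rm_norm hX).
by apply: le_trans (ler_normD _ _) _; apply: lerD; [exact: (lm_norm hX) | exact: psi_norm].
Qed.

Lemma lie_derivation_decomposition : exists d tau : A -> X,
  [/\ is_derivation mul lm rm d, bounded d, islinear tau /\ bounded tau,
      (forall a, in_center lm rm (tau a)) &
      (forall a b, tau (mul a b - mul b a) = 0) /\ (forall a, D a = d a + tau a)].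
Proof.
have der := inner_limit_derivation hX hLam derivation_part_approx.
have der_bnd := inner_limit_bounded hX hLam Phi_t_bounded derivation_part_approx.
have lie := lie_derivationB hX hD (derivation_lie der).
have central a : in_center lm rm (D a - derivation_part a).
  by rewrite /derivation_part opprB addrC subrK; apply: central_part_central.
exists derivation_part, (fun a => D a - derivation_part a); split => //.
- by case: lie => lin _; split => //; apply: bnd_sub.
- split; first exact: central_lie_derivation_commutator lie central.
  by move=> a; rewrite addrC subrK.
Qed.

End LieDecomposition.

Theorem theorem6p4
  (R : realType) (A X T : completeNormedModType R[i])
  (mul : A -> A -> A) (lm : A -> X -> X) (rm : X -> A -> X)
  (hA : banach_algebra mul) (hX : banach_bimodule mul lm rm)
  (* T = A^# (^) A^#, with its module actions, flip and product map *)
  (tens : A * R[i] -> A * R[i] -> T)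
  (hT : is_proj_tensor (@unit_norm R A) tens)
  (lact : A * R[i] -> T -> T)
  (hlact : forall u, [/\ islinear (lact u), bounded_op Num.norm Num.norm (lact u) &
             forall v w, lact u (tens v w) = tens (unit_mul mul u v) w])
  (ract : A * R[i] -> T -> T)
  (hract : forall u, [/\ islinear (ract u), bounded_op Num.norm Num.norm (ract u) &
             forall v w, ract u (tens v w) = tens v (unit_mul mul w u)])
  (flip : T -> T)
  (hflip : [/\ islinear flip, bounded_op Num.norm Num.norm flip &
             forall v w, flip (tens v w) = tens w v])
  (pi : T -> A * R[i])
  (hpi : [/\ islinear pi, bounded_op Num.norm (@unit_norm R A) pi &
             forall v w, pi (tens v w) = unit_mul mul v w])
  (* symmetric approximate diagonal of A^# *)
  (Lam : Type) (le : Lam -> Lam -> Prop) (t : Lam -> T)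
  (hLam : directed le)
  (hsym : forall l, flip (t l) = t l)
  (hdiag : forall u, net_to0 le (fun l => `|lact u (t l) - ract u (t l)|))
  (hunit : forall u, net_to0 le (fun l => unit_norm (unit_mul mul (pi (t l)) u - u)))
  (* psi_x and boundedness of the nets psi_x(t_l) *)
  (psi : X -> T -> X)
  (hpsi : forall x, [/\ islinear (psi x), bounded_op Num.norm Num.norm (psi x) &
             forall v w, psi x (tens v w) = unit_ract rm (unit_lact lm v x) w])
  (hpsib : forall x, net_bounded Num.norm (fun l => psi x (t l)))
  (* bounded Lie derivation D and Phi_D *)
  (D : A -> X)
  (hD : is_lie_derivation mul lm rm D) (hDb : bounded_op Num.norm Num.norm D)
  (Phi : T -> X)
  (hPhi : [/\ islinear Phi, bounded_op Num.norm Num.norm Phi &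
             forall v w, Phi (tens v w) = unit_lact lm v (D w.1)])
  (hPhib : net_bounded Num.norm (fun l => Phi (t l))) :
  exists (d tau : A -> X),
    [/\ is_derivation mul lm rm d, bounded_op Num.norm Num.norm d,
        islinear tau /\ bounded_op Num.norm Num.norm tau,
        (forall a, in_center lm rm (tau a)) &
        (forall a b, tau (mul a b - mul b a) = 0) /\ (forall a, D a = d a + tau a)].
Proof.
exact: (lie_derivation_decomposition hA hX hT hlact hract hflip hpi hpsi hD hDb hPhi
  hLam hsym hdiag hunit hpsib hPhib).
Qed.
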